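(* Let $F$ be an exponential functor and write $\theta_{jk}=F(t_j)-F(t_k)$. Then the $R_F^W$-submodule $(I_F^{\mathrm{sgn}})^W$ of $(R_F^{\mathrm{sgn}})^W$ is generated by the two antisymmetric elements $q_+=\theta_{12}t_3+\theta_{23}t_1+\theta_{31}t_2$ and $q_-=\theta_{12}t_3^{-1}+\theta_{23}t_1^{-1}+\theta_{31}t_2^{-1}$, and $$\Psi(q_\pm)=-\frac{1}{\Delta}\det\begin{pmatrix}F(t_1)&F(t_2)&F(t_3)\\ t_1^{\pm1}&t_2^{\pm1}&t_3^{\pm1}\\1&1&1\end{pmatrix}.$$ Consequently $\Psi((I_F^{\mathrm{sgn}})^W)$ is generated by these two elements.
   Context: An exponential functor is a functor $F$ on finite-dimensional complex inner product spaces and unitary isomorphisms, preserving adjoints, with natural unitary isomorphisms $F(V\oplus W)\cong F(V)\otimes F(W)$, $F(0)\cong\mathbb C$, associative and unital. $R(\mathbb T^2)\cong\mathbb Z[t_i^{\pm1}]/(t_1t_2t_3-1)$ is the representation ring of the diagonal maximal torus of $SU(3)$, $F(t_i)$ the character of $F(\mathbb C)$ with $\mathbb T^2$ acting via the $i$-th diagonal entry, $R_F=R(\mathbb T^2)[(F(t_1)F(t_2)F(t_3))^{-1}]\otimes\mathbb Q$. $W=S_3$ acts on $R_F$ by permuting $t_1,t_2,t_3$; $R_F^W$ denotes invariants. $R_F^{\mathrm{sgn}}$ is $R_F$ with the action $w\cdot p=\mathrm{sgn}(w)w(p)$, and $(R_F^{\mathrm{sgn}})^W$ its invariants (the antisymmetric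 elements), an $R_F^W$-module. $I_F^{\mathrm{sgn}}\subset R_F^{\mathrm{sgn}}$ is the ideal $(F(t_2)-F(t_1),F(t_3)-F(t_2))$ with the signed action and $(I_F^{\mathrm{sgn}})^W$ its invariants. $\Delta=(t_1-t_2)(t_2-t_3)(t_3-t_1)$ and $\Psi\colon(R_F^{\mathrm{sgn}})^W\to R_F^W$, $p\mapsto p/\Delta$, is the $R_F^W$-module isomorphism given by division by $\Delta$. *)

From HB Require Import structures.
From mathcomp Require Import all_boot all_order all_algebra all_fingroup.
From mathcomp Require Import mpoly.
Set Implicit Arguments. Unset Strict Implicit. Unset Printing Implicit Defensive.
Import Order.TTheory GRing.Theory Num.Theory.
Local Open Scope ring_scope.

(* R(T^2) (x) Q  =  Q[t1^{+-1},t2^{+-1},t3^{+-1}]/(t1 t2 t3 - 1)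
                =  Q[t1,t2,t3]/(t1 t2 t3 - 1)   (t_i^{-1} = product of the two others).
   Variables t1,t2,t3 are 'X_0,'X_1,'X_2 of {mpoly rat[3]}; W = S_3 = 'S_3 acts by msym. *)
Notation Pol := {mpoly rat[3]}.

Definition tv (i : 'I_3) : Pol := 'X_i.
(* representative of t_i^{-1} *)
Definition tinv (i : 'I_3) : Pol := \prod_(j < 3 | j != i) 'X_j.
Definition relT : Pol := 'X_0 * 'X_1 * 'X_2 - 1.

(* A Laurent polynomial f(t) = t^{-m} * g(t) in R(U(1)) = Z[t^{+-1}];
   F(t_i) is f evaluated at t_i, as an element of R(T^2) (x) Q. *)
Definition Fch (m : nat) (g : {poly int}) (i : 'I_3) : Pol :=
  tinv i ^+ m * \sum_(k < size g) (g`_k)%:~R *: (tv i ^+ k).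

Definition Dloc (m : nat) (g : {poly int}) : Pol := \prod_(i < 3) Fch m g i.

(* Elements of R_F = (R(T^2) (x) Q)[D^{-1}] are represented as fractions P / D^k *)
Record RF := mkRF { rnum : Pol; rexp : nat }.

Section RFops.
Variables (m : nat) (g : {poly int}).
Let D := Dloc m g.

(* equality in the localisation of Q[t1,t2,t3]/(t1t2t3-1) at D *)
Definition eqRF (x y : RF) : Prop :=
  exists (n : nat) (c : Pol),
    D ^+ n * (D ^+ rexp y * rnum x - D ^+ rexp x * rnum y) = c * relT.

Definition inRF (P : Pol) : RF := mkRF P 0.
Definition addRF (x y : RF) : RF :=
  mkRF (D ^+ rexp y * rnum x + D ^+ rexp x * rnum y) (rexp x + rexp y).
Definition mulRF (x y : RF) : RF := mkRF (rnum x * rnum y) (rexp x + rexp y).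

(* W = S_3 acts by permuting t1,t2,t3 (D is W-invariant) *)
Definition actRF (s : 'S_3) (x : RF) : RF := mkRF (msym s (rnum x)) (rexp x).
Definition sactRF (s : 'S_3) (x : RF) : RF :=
  mkRF ((-1) ^+ odd_perm s * msym s (rnum x)) (rexp x).

Definition symRF (x : RF) : Prop := forall s : 'S_3, eqRF (actRF s x) x.
Definition antiRF (x : RF) : Prop := forall s : 'S_3, eqRF (sactRF s x) x.

Definition inIF (x : RF) : Prop :=
  exists a b : RF,
    eqRF x (addRF (mulRF a (inRF (Fch m g 1 - Fch m g 0)))
                  (mulRF b (inRF (Fch m g 2 - Fch m g 1)))).

Definition theta (j k : 'I_3) : Pol := Fch m g j - Fch m g k.

Definition qplus : RF :=
  inRF (theta 0 1 * tv 2 + theta 1 2 * tv 0 + theta 2 0 * tv 1).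
Definition qminus : RF :=
  inRF (theta 0 1 * tinv 2 + theta 1 2 * tinv 0 + theta 2 0 * tinv 1).

Definition detMat (plus : bool) : Pol :=
  \det (\matrix_(i < 3, j < 3)
          (if i == 0 :> nat then Fch m g j
           else if i == 1 :> nat then (if plus then tv j else tinv j)
           else 1)).
End RFops.

Definition Delta : Pol := ('X_0 - 'X_1) * ('X_1 - 'X_2) * ('X_2 - 'X_0).

From HB Require Import structures.
From mathcomp Require Import all_boot all_order all_algebra all_fingroup.
From mathcomp Require Import mpoly ring.
Set Implicit Arguments. Unset Strict Implicit. Unset Printing Implicit Defensive.
Import GRing.Theory.
Local Open Scope ring_scope.

(* All statements are identities in Q[t1,t2,t3] modulo t1 t2 t3 - 1, up to powers of
   D = F(t1) F(t2) F(t3).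
   q+ and q- are minus the determinants of the statement, so W permutes their columns
   and they are antisymmetric; they lie in I_F since theta_31 = - theta_12 - theta_23.
   If p = a (F(t2) - F(t1)) + b (F(t3) - F(t2)) is antisymmetric, antisymmetrising gives
   6 p = Alt(a theta_21) + Alt(b theta_32), and theta_32 is a rotation of theta_21.
   Over the symmetric polynomials Q[t] is free on 1, t1, t1^2, t2, t1 t2, t1^2 t2, and
   Alt(b theta_21) is an explicit symmetric combination of q+ and q- for each basis
   element b.
   For Psi: t_i^-1 = t_j t_k = t_i^2 - e1 t_i + e2, so F(t_i) = Q(t_i) for a polynomial Q
   with symmetric coefficients, and sum_cyc t1^k (t3 - t2) is Delta times a symmetric
   polynomial. Finally Delta is a non-zero-divisor modulo t1 t2 t3 - 1: substituting
   t_j := t_i kills t_i - t_j but not the relation. *)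

Section Multiples.
Variable R : comPzRingType.
Implicit Types r x y : R.

Definition multiple_of r x := exists c, x = c * r.

Lemma multiple_of0 r : multiple_of r 0.
Proof. by exists 0; rewrite mul0r. Qed.

Lemma multiple_ofD r x y :
  multiple_of r x -> multiple_of r y -> multiple_of r (x + y).
Proof. by move=> [a ->] [b ->]; exists (a + b); rewrite mulrDl. Qed.

Lemma multiple_ofN r x : multiple_of r x -> multiple_of r (- x).
Proof. by move=> [a ->]; exists (- a); rewrite mulNr. Qed.

Lemma multiple_ofMl r x y : multiple_of r x -> multiple_of r (y * x).
Proof. by move=> [a ->]; exists (y * a); rewrite mulrA. Qed.

End Multiples.

Section MPolyFacts.
Variables (n : nat) (R : comNzRingType).
Implicit Types p q : {mpoly R[n]}.

Lemma msymXU (s : 'S_n) (i : 'I_n) : msym s 'X_i = 'X_(s i) :> {mpoly R[n]}.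
Proof.
rewrite /msym mmapX /mmap1 (bigD1 i) //= big1 ?mulr1; first by rewrite mnm1E eqxx expr1.
by move=> j /negPf ji; rewrite mnm1E eq_sym ji expr0.
Qed.

Lemma msymXn (s : 'S_n) p k : msym s (p ^+ k) = msym s p ^+ k.
Proof. exact: rmorphXn. Qed.

Lemma mpoly_mulX_ind (P : {mpoly R[n]} -> Prop) :
  P 1 -> (forall p q, P p -> P q -> P (p + q)) ->
  (forall c p, P p -> P (c *: p)) -> (forall i p, P p -> P ('X_i * p)) ->
  forall p, P p.
Proof.
move=> P1 PD PZ PX.
have PXn i k p : P p -> P ('X_i ^+ k * p).
  by elim: k => [|k IH] Pp; rewrite ?expr0 ?mul1r // exprS -mulrA; apply/PX/IH.
have P0 : P 0 by rewrite -(scale0r 1); apply: PZ.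
elim/mpolyind => // c m p _ _ Pp; apply: PD => //; apply: PZ.
rewrite mpolyXE_id; elim/big_rec: _ => // i q _ Pq.
by rewrite -[_ * q]mulr1 -mulrA; apply: PXn; rewrite mulr1.
Qed.

Lemma multiple_of_sub_comp_mpoly (L : {mpoly R[n]}) (lq : n.-tuple {mpoly R[n]}) :
  (forall i : 'I_n, multiple_of L ('X_i - lq`_i)) ->
  forall p, multiple_of L (p - (p \mPo lq)).
Proof.
move=> hX; elim/mpoly_mulX_ind => [|p q hp hq|c p [d hd]|i p hp] /=.
- by rewrite comp_mpoly1 subrr; apply: multiple_of0.
- by rewrite comp_mpolyD opprD addrACA; apply: multiple_ofD.
- by exists (c *: d); rewrite comp_mpolyZ -scalerBr hd scalerAl.
- rewrite rmorphM /= comp_mpolyXU.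
  have -> : 'X_i * p - lq`_i * (p \mPo lq) =
    p * ('X_i - lq`_i) + lq`_i * (p - (p \mPo lq)) by ring.
  by apply: multiple_ofD; apply: multiple_ofMl.
Qed.

End MPolyFacts.

Lemma multiple_of_cancel_subst (R : idomainType) n (r L : {mpoly R[n]})
    (lq : n.-tuple {mpoly R[n]}) :
  (forall i : 'I_n, multiple_of L ('X_i - lq`_i)) ->
  L \mPo lq = 0 -> L != 0 -> r \mPo lq != 0 ->
  forall y, multiple_of r (L * y) -> multiple_of r y.
Proof.
move=> hX hL0 nzL nzr y [c hc].
have /eqP : (c \mPo lq) * (r \mPo lq) = 0 by rewrite -rmorphM -hc rmorphM /= hL0 mul0r.
rewrite mulf_eq0 (negPf nzr) orbF => /eqP c0.
have [d hd] := multiple_of_sub_comp_mpoly hX c; rewrite c0 subr0 in hd.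
by exists d; apply: (mulfI nzL); rewrite hc hd; ring.
Qed.

Section Antisymmetrization.
Variables (n : nat) (R : comNzRingType).
Implicit Types p q : {mpoly R[n]}.

Definition asym p : {mpoly R[n]} := \sum_(s : 'S_n) (-1) ^+ s * msym s p.

Lemma asymD p q : asym (p + q) = asym p + asym q.
Proof. by rewrite -big_split; apply: eq_bigr => s _; rewrite msymD mulrDr. Qed.

Lemma asymMsym c p : c \is symmetric -> asym (c * p) = c * asym p.
Proof.
move=> /issymP sym_c; rewrite mulr_sumr; apply: eq_bigr => s _.
by rewrite msymM sym_c mulrCA.
Qed.

Lemma asym_msym s p : asym (msym s p) = (-1) ^+ s * asym p.
Proof.
rewrite /asym mulr_sumr [RHS](reindex_inj (mulgI s)); apply: eq_bigr => t _.
by rewrite -msymMm odd_permM signr_addb -!mulrA signrMK.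
Qed.

End Antisymmetrization.

Definition s01 : 'S_3 := tperm 0 1.
Definition s12 : 'S_3 := tperm 1 2.
Definition s02 : 'S_3 := tperm 0 2.
Definition r1 : 'S_3 := (s12 * s01)%g.
Definition r2 : 'S_3 := (s01 * s12)%g.

Lemma S3_valsE :
  (s01 0 = 1) * (s01 1 = 0) * (s01 2 = 2) * (s12 0 = 0) * (s12 1 = 2) * (s12 2 = 1)
  * (s02 0 = 2) * (s02 1 = 1) * (s02 2 = 0) * (r1 0 = 1) * (r1 1 = 2) * (r1 2 = 0)
  * (r2 0 = 2) * (r2 1 = 0) * (r2 2 = 1).
Proof. by rewrite /r1 /r2 !permM /s01 /s12 /s02 !permE. Qed.

Lemma S3_oddE :
  (odd_perm s01) * (odd_perm s12) * (odd_perm s02) * (odd_perm r1 = false) * (odd_perm r2 = false).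
Proof. by rewrite !odd_permM !odd_tperm. Qed.

Lemma sum_S3 (V : nmodType) (F : 'S_3 -> V) :
  \sum_(s : 'S_3) F s = F 1%g + F s01 + F s12 + F s02 + F r1 + F r2.
Proof.
set r := [:: 1%g; s01; s12; s02; r1; r2].
have r_uniq : uniq r.
  by apply: (@map_uniq _ _ (fun s : 'S_3 => (s 0, s 1))); rewrite /= !perm1 !S3_valsE.
have r_full : r =i predT.
  apply/subset_cardP; last exact/subset_predT.
  by rewrite card_Sn; apply/card_uniqP.
rewrite (eq_bigl (mem r)) => [|s]; last by rewrite /= r_full.
by rewrite -big_uniq // !big_cons big_nil /= addr0 !addrA.
Qed.

Lemma asym3E (R : comNzRingType) (p : {mpoly R[3]}) :
  asym p = p - msym s01 p - msym s12 p - msym s02 p + msym r1 p + msym r2 p.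
Proof.
by rewrite /asym sum_S3 odd_perm1 msym1m !S3_oddE expr0 expr1 !mul1r !mulN1r.
Qed.

Section Equivariance.
Variables (n : nat) (R : comNzRingType) (F : 'I_n -> {mpoly R[n]}).
Hypothesis msymF : forall (s : 'S_n) i, msym s (F i) = F (s i).

Lemma sum_equivariant_sym : \sum_i F i \is symmetric.
Proof.
apply/issymP => s; rewrite raddf_sum [RHS](reindex_inj (@perm_inj _ s)) /=.
by apply: eq_bigr => i _; rewrite msymF.
Qed.

Lemma prod_equivariant_sym : \prod_i F i \is symmetric.
Proof.
apply/issymP => s; rewrite rmorph_prod [RHS](reindex_inj (@perm_inj _ s)) /=.
by apply: eq_bigr => i _; rewrite msymF.
Qed.

End Equivariance.

Lemma ord3_cases (i : 'I_3) : [\/ i = 0, i = 1 | i = 2].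
Proof.
by case: i => [[|[|[|//]]] Hk]; [constructor 1|constructor 2|constructor 3]; apply: val_inj.
Qed.

Lemma big3 (R : Type) (idx : R) (op : Monoid.law idx) (F : 'I_3 -> R) :
  \big[op/idx]_(i < 3) F i = op (op (F 0) (F 1)) (F 2).
Proof.
rewrite !big_ord_recr big_ord0 /= Monoid.mul1m.
by congr (op (op (F _) (F _)) (F _)); apply: val_inj.
Qed.

(* ring is much faster once the large atoms F(t_i), D and t_i^-1 are abstracted. *)
Ltac pol_ring :=
  repeat match goal with
  | |- context [Dloc ?m ?g] => let D := fresh "D" in set D := Dloc m g; clearbody D
  | |- context [Fch ?m ?g ?i] => let F := fresh "F" in set F := Fch m g i; clearbody F
  | |- context [tinv ?i] => let T := fresh "T" in set T := tinv i; clearbody T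
  end; ring.

Lemma tinvE : [/\ tinv 0 = 'X_1 * 'X_2, tinv 1 = 'X_0 * 'X_2 & tinv 2 = 'X_0 * 'X_1].
Proof. by split; rewrite /tinv big_mkcond big3 /= ?mul1r ?mulr1. Qed.

Lemma msym_tinv (s : 'S_3) i : msym s (tinv i) = tinv (s i).
Proof.
rewrite /tinv rmorph_prod [RHS](reindex_inj (@perm_inj _ s)) /=.
by apply: eq_big => [j|j _]; rewrite ?(inj_eq perm_inj) ?msymXU.
Qed.

Definition e1 : Pol := \sum_i 'X_i.
Definition e2 : Pol := \sum_i tinv i.
Definition e3 : Pol := \prod_i 'X_i.

Lemma e1E : e1 = 'X_0 + 'X_1 + 'X_2. Proof. by rewrite /e1 big3. Qed.
Lemma e2E : e2 = 'X_1 * 'X_2 + 'X_0 * 'X_2 + 'X_0 * 'X_1.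
Proof. by case: tinvE => h0 h1 h2; rewrite /e2 big3 h0 h1 h2. Qed.
Lemma e3E : e3 = 'X_0 * 'X_1 * 'X_2. Proof. by rewrite /e3 big3. Qed.

Lemma tinv_quad i : tinv i = 'X_i ^+ 2 - e1 * 'X_i + e2.
Proof.
by case: tinvE => h0 h1 h2; rewrite e1E e2E; case: (ord3_cases i) => ->;
  rewrite ?h0 ?h1 ?h2; ring.
Qed.

Lemma e1_sym : e1 \is symmetric.
Proof. by apply: sum_equivariant_sym => s i; rewrite msymXU. Qed.
Lemma e2_sym : e2 \is symmetric.
Proof. exact/sum_equivariant_sym/msym_tinv. Qed.
Lemma e3_sym : e3 \is symmetric.
Proof. by apply: prod_equivariant_sym => s i; rewrite msymXU. Qed.

Lemma relT_msym (s : 'S_3) : msym s relT = relT.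
Proof. by rewrite /relT -e3E msymB msym1 (issymP _ e3_sym). Qed.

Ltac sym_closed := repeat match goal with
  | |- is_true (_ + _ \in _) => apply: rpredD
  | |- is_true (- _ \in _) => rewrite rpredN
  | |- is_true (_ * _ \in _) => apply: rpredM
  | |- is_true (_ ^+ _ \in _) => apply: rpredX
  | |- is_true (_ *: _ \in _) => apply: rpredZ
  | |- is_true (e1 \in _) => exact: e1_sym
  | |- is_true (e2 \in _) => exact: e2_sym
  | |- is_true (e3 \in _) => exact: e3_sym
  | |- is_true (0 \in _) => exact: rpred0
  | |- is_true (1 \in _) => exact: rpred1
  | |- is_true (_%:R \in _) => exact: rpred_nat
  | h : forall k, is_true (?f k \in _) |- is_true (?f _ \in _) => exact: h
  | |- _ => assumption
  end.

Definition artin_comb (c : nat -> Pol) : Pol :=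
  c 0%N + c 1%N * 'X_0 + c 2%N * 'X_0 ^+ 2 + c 3%N * 'X_1 + c 4%N * ('X_0 * 'X_1)
  + c 5%N * ('X_0 ^+ 2 * 'X_1).

Definition artin_decomposable (p : Pol) :=
  exists c : nat -> Pol, (forall k, c k \is symmetric) /\ p = artin_comb c.

Lemma artin_decomposition p : artin_decomposable p.
Proof.
elim/mpoly_mulX_ind: p => [|p q [c [hc ->]] [d [hd ->]]|a p [c [hc ->]]|].
- exists (fun k => if k is 0%N then 1 else 0); split; first by case=> *; sym_closed.
  by rewrite /artin_comb; pol_ring.
- exists (fun k => c k + d k); split; first by move=> k; sym_closed.
  by rewrite /artin_comb; pol_ring.
- exists (fun k => a *: c k); split; first by move=> k; sym_closed.
  by rewrite /artin_comb !scalerDr -!scalerAl.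
(* X0^3 = e1 X0^2 - e2 X0 + e3, and X1^2 = (e1 - X0) X1 - e2 + e1 X0 - X0^2 *)
have mulX0 p : artin_decomposable p -> artin_decomposable ('X_0 * p).
  move=> [c [hc ->]].
  exists (fun k => match k with 0%N => e3 * c 2%N | 1%N => c 0%N - e2 * c 2%N
     | 2%N => c 1%N + e1 * c 2%N | 3%N => e3 * c 5%N | 4%N => c 3%N - e2 * c 5%N
     | _ => c 4%N + e1 * c 5%N end); split; first by case=> [|[|[|[|[|k]]]]] /=; sym_closed.
  by rewrite /artin_comb /= e1E e2E e3E; pol_ring.
have mulX1 p : artin_decomposable p -> artin_decomposable ('X_1 * p).
  move=> [c [hc ->]].
  exists (fun k => match k with 0%N => - e2 * c 3%N - e3 * c 4%N
     | 1%N => e1 * c 3%N - e3 * c 5%N | 2%N => - c 3%N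
     | 3%N => c 0%N + e1 * c 3%N - e3 * c 5%N
     | 4%N => c 1%N - c 3%N + e1 * c 4%N + e2 * c 5%N
     | _ => c 2%N - c 4%N end); split; first by case=> [|[|[|[|[|k]]]]] /=; sym_closed.
  by rewrite /artin_comb /= e1E e2E e3E; pol_ring.
move=> i p hp; case: (ord3_cases i) => ->; [exact: mulX0|exact: mulX1|].
have -> : 'X_2 * p = e1 * p - 'X_0 * p - 'X_1 * p by rewrite e1E; pol_ring.
have [[d [hd ->]] [f [hf ->]]] := (mulX0 p hp, mulX1 p hp).
case: hp => [c [hc ->]].
exists (fun k => e1 * c k - d k - f k); split; first by move=> k; sym_closed.
by rewrite /artin_comb; pol_ring.
Qed.

Lemma multiple_relT_cancel_subX (i j : 'I_3) (y : Pol) : i != j ->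
  multiple_of relT (('X_i - 'X_j) * y) -> multiple_of relT y.
Proof.
move=> ij; pose lq := [tuple if k == j then 'X_i else 'X_k | k < 3] : 3.-tuple Pol.
have lqE (k : 'I_3) : lq`_k = if k == j then 'X_i else 'X_k by rewrite -tnth_nth tnth_mktuple.
apply: (multiple_of_cancel_subst (lq := lq)).
- move=> k; rewrite lqE; case: eqP => [->|_]; last by rewrite subrr; apply: multiple_of0.
  by exists (-1); rewrite mulN1r opprB.
- by rewrite rmorphB /= !comp_mpolyXU !lqE eqxx (negPf ij) subrr.
- apply: contra_neq ij => /(congr1 (meval (fun k => (k : nat)%:R : rat))).
  by rewrite meval0 mevalB !mevalXU => /eqP; rewrite subr_eq0 Num.Theory.eqr_nat => /eqP /val_inj.
- apply/negP => /eqP /(congr1 (meval (fun _ => 2%:R : rat))).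
  rewrite /relT rmorphB rmorph1 !rmorphM /= !comp_mpolyXU !lqE.
  by rewrite meval0 mevalB !mevalM meval1 !(fun_if (meval _)) !mevalXU !if_same.
Qed.

Lemma multiple_relT_cancel_Delta (y : Pol) :
  multiple_of relT (Delta * y) -> multiple_of relT y.
Proof.
rewrite /Delta -!mulrA.
by do 3 move/multiple_relT_cancel_subX => /(_ isT).
Qed.

Lemma msym_Fch m g (s : 'S_3) i : msym s (Fch m g i) = Fch m g (s i).
Proof.
rewrite /Fch msymM rmorphXn /= msym_tinv raddf_sum /=; congr (_ * _).
by apply: eq_bigr => k _; rewrite msymZ rmorphXn /= msymXU.
Qed.

Lemma Dloc_sym m g : Dloc m g \is symmetric.
Proof. exact/prod_equivariant_sym/msym_Fch. Qed.

Section Localisation.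
Variables (m : nat) (g : {poly int}).
Local Notation D := (Dloc m g).
Local Notation eqR := (eqRF m g).

Definition eqloc (P Q : Pol) := exists k, multiple_of relT (D ^+ k * (P - Q)).

Lemma eqRFE x y : eqR x y <-> eqloc (D ^+ rexp y * rnum x) (D ^+ rexp x * rnum y).
Proof. by []. Qed.

Lemma eq_eqloc P Q : P = Q -> eqloc P Q.
Proof. by move=> ->; exists 0%N; rewrite subrr mulr0; apply: multiple_of0. Qed.

Lemma eqloc_sym P Q : eqloc P Q -> eqloc Q P.
Proof. by move=> [k hk]; exists k; rewrite -opprB mulrN; apply: multiple_ofN. Qed.

Lemma eqloc_trans P Q S : eqloc P Q -> eqloc Q S -> eqloc P S.
Proof.
move=> [k1 h1] [k2 h2]; exists (k1 + k2)%N.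
have -> : D ^+ (k1 + k2) * (P - S) =
    D ^+ k2 * (D ^+ k1 * (P - Q)) + D ^+ k1 * (D ^+ k2 * (Q - S)).
  by rewrite exprD; pol_ring.
by apply: multiple_ofD; apply: multiple_ofMl.
Qed.

Lemma eqloc_add P1 Q1 P2 Q2 :
  eqloc P1 Q1 -> eqloc P2 Q2 -> eqloc (P1 + P2) (Q1 + Q2).
Proof.
move=> [k1 h1] [k2 h2]; exists (k1 + k2)%N.
have -> : D ^+ (k1 + k2) * (P1 + P2 - (Q1 + Q2)) =
    D ^+ k2 * (D ^+ k1 * (P1 - Q1)) + D ^+ k1 * (D ^+ k2 * (P2 - Q2)).
  by rewrite exprD; pol_ring.
by apply: multiple_ofD; apply: multiple_ofMl.
Qed.

Lemma eqloc_mull c P Q : eqloc P Q -> eqloc (c * P) (c * Q).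
Proof.
move=> [k hk]; exists k.
by rewrite -mulrBr mulrCA; apply: multiple_ofMl.
Qed.

Lemma eqloc_scale (c : rat) P Q : eqloc P Q -> eqloc (c *: P) (c *: Q).
Proof. by rewrite -!mul_mpolyC; apply: eqloc_mull. Qed.

Lemma eqloc_mulDl k P Q : eqloc (D ^+ k * P) (D ^+ k * Q) -> eqloc P Q.
Proof. by move=> [j hj]; exists (j + k)%N; rewrite exprD -mulrA mulrBr. Qed.

Lemma eqloc_sum (I : Type) (r : seq I) (F G : I -> Pol) :
  (forall i, eqloc (F i) (G i)) -> eqloc (\sum_(i <- r) F i) (\sum_(i <- r) G i).
Proof. by move=> FG; apply: big_ind2 => [|*|*]; [apply: eq_eqloc | apply: eqloc_add |]. Qed.

Lemma eqloc_msym (s : 'S_3) P Q : eqloc P Q -> eqloc (msym s P) (msym s Q).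
Proof.
move=> [k [c hc]]; exists k; exists (msym s c).
by rewrite -(relT_msym s) -msymM -hc msymM rmorphXn msymB /= (issymP _ (Dloc_sym m g)).
Qed.

Lemma eqloc_asym P Q : eqloc P Q -> eqloc (asym P) (asym Q).
Proof. by move=> PQ; apply: eqloc_sum => s; apply/eqloc_mull/eqloc_msym. Qed.

Lemma eqloc_cancel_Delta P Q : eqloc (Delta * P) (Delta * Q) -> eqloc P Q.
Proof.
move=> [k hk]; exists k; apply: multiple_relT_cancel_Delta.
by rewrite mulrCA mulrBr.
Qed.

Lemma symRF_sym A E : A \is symmetric -> symRF m g (mkRF A E).
Proof. by move=> /issymP A_sym s; apply/eqRFE/eq_eqloc; rewrite /= A_sym. Qed.

Lemma eqRF_refl x : eqR x x.
Proof. exact/eqRFE/eq_eqloc. Qed.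

Lemma eqRF_sym x y : eqR x y -> eqR y x.
Proof. by rewrite !eqRFE; apply: eqloc_sym. Qed.

Lemma eqRF_trans x y z : eqR x y -> eqR y z -> eqR x z.
Proof.
case: x y z => [x ex] [y ey] [z ez]; rewrite !eqRFE /= => hxy hyz.
apply: (@eqloc_mulDl ey); rewrite [X in eqloc X _]mulrCA.
apply: eqloc_trans (eqloc_mull _ hxy) _.
by rewrite mulrCA [X in eqloc _ X]mulrCA; apply: eqloc_mull.
Qed.

Lemma eqRF_add x x' y y' : eqR x x' -> eqR y y' -> eqR (addRF m g x y) (addRF m g x' y').
Proof.
case: x x' y y' => [x ex] [x' ex'] [y ey] [y' ey']; rewrite !eqRFE /= => hx hy.
have e (P Q : Pol) (a b a' b' : nat) : D ^+ (a' + b') * (D ^+ b * P + D ^+ a * Q) =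
    D ^+ (b + b') * (D ^+ a' * P) + D ^+ (a + a') * (D ^+ b' * Q).
  by rewrite !exprD; pol_ring.
by rewrite !e (addnC ey') (addnC ex'); apply: eqloc_add; apply: eqloc_mull.
Qed.

Lemma eqRF_mul x x' y y' : eqR x x' -> eqR y y' -> eqR (mulRF x y) (mulRF x' y').
Proof.
case: x x' y y' => [x ex] [x' ex'] [y ey] [y' ey']; rewrite !eqRFE /= => hx hy.
rewrite !exprD mulrACA [X in eqloc _ X]mulrACA.
apply: eqloc_trans (_ : eqloc _ (D ^+ ex * x' * (D ^+ ey' * y))) (eqloc_mull _ hy).
by rewrite mulrC [X in eqloc _ X]mulrC; apply: eqloc_mull.
Qed.

Lemma eqRF_factorl c a b x y :
  eqR (addRF m g (mulRF a (mulRF c x)) (mulRF b (mulRF c y)))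
      (mulRF c (addRF m g (mulRF a x) (mulRF b y))).
Proof.
case: c a b x y => [c ec] [a ea] [b eb] [x ex] [y ey].
by apply/eqRFE/eq_eqloc; rewrite /= !exprD; pol_ring.
Qed.

Lemma eqRF_cancel_Delta x y :
  eqR (mulRF (inRF Delta) x) (mulRF (inRF Delta) y) -> eqR x y.
Proof.
case: x y => [x ex] [y ey]; rewrite !eqRFE /= !add0n !(mulrCA _ Delta).
exact: eqloc_cancel_Delta.
Qed.

End Localisation.

Lemma det_mx33 (R : comNzRingType) (A : 'M[R]_3) : \det A =
  A 0 0 * A 1 1 * A 2 2 + A 0 1 * A 1 2 * A 2 0 + A 0 2 * A 1 0 * A 2 1
  - A 0 0 * A 1 2 * A 2 1 - A 0 1 * A 1 0 * A 2 2 - A 0 2 * A 1 1 * A 2 0.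
Proof.
have ordE (i : 'I_3) : i = if val i == 0%N then 0 else if val i == 1%N then 1 else 2.
  by case: (ord3_cases i) => ->.
rewrite (expand_det_row _ 0) big3 /cofactor !(expand_det_row _ 0) /cofactor.
rewrite !big_ord_recr !big_ord0 /= !det_mx11 !mxE.
do ?[rewrite [lift _ _]ordE /=].
rewrite !modn_small //=; ring.
Qed.

Section Generators.
Variables (m : nat) (g : {poly int}).

Lemma detMat_msym (s : 'S_3) b : msym s (detMat m g b) = (-1) ^+ s * detMat m g b.
Proof.
rewrite /detMat -det_map_mx; set M := \matrix_(i, j) _.
have -> : map_mx (msym s) M = col_perm s M.
  apply/matrixP => i j; rewrite !mxE.
  by case: ifP => _; [|case: ifP => _; [case: (b)|]]; rewrite ?msym_Fch ?msymXU ?msym_tinv ?msym1.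
by rewrite col_permE det_mulmx det_perm odd_permV mulrC.
Qed.

Lemma qplusE : qplus m g = inRF (- detMat m g true).
Proof.
rewrite /qplus /detMat det_mx33 !mxE /=; congr inRF; rewrite /theta /tv; pol_ring.
Qed.

Lemma qminusE : qminus m g = inRF (- detMat m g false).
Proof.
rewrite /qminus /detMat det_mx33 !mxE /=; congr inRF; rewrite /theta; pol_ring.
Qed.

Lemma antiRF_det b : antiRF m g (inRF (- detMat m g b)).
Proof.
move=> s; apply/eqRFE/eq_eqloc.
by rewrite /= msymN detMat_msym mulrN signrMK.
Qed.

Lemma inIF_qplus : inIF m g (qplus m g).
Proof.
exists (inRF ('X_1 - 'X_2)), (inRF ('X_1 - 'X_0)); apply/eqRFE/eq_eqloc.
rewrite /= /theta /tv; pol_ring.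
Qed.

Lemma inIF_qminus : inIF m g (qminus m g).
Proof.
exists (inRF (tinv 1 - tinv 2)), (inRF (tinv 1 - tinv 0)); apply/eqRFE/eq_eqloc.
rewrite /= /theta; pol_ring.
Qed.

End Generators.

Definition cyc_alt (f : 'I_3 -> Pol) : Pol :=
  f 0 * ('X_2 - 'X_1) + f 1 * ('X_0 - 'X_2) + f 2 * ('X_1 - 'X_0).

Definition Delta_sym_multiple (P : Pol) := exists2 r, r \is symmetric & P = Delta * r.

Lemma Delta_sym_multipleD P Q :
  Delta_sym_multiple P -> Delta_sym_multiple Q -> Delta_sym_multiple (P + Q).
Proof. by move=> [r hr ->] [r' hr' ->]; exists (r + r'); rewrite ?rpredD ?mulrDr. Qed.

Lemma Delta_sym_multipleMl c P :
  c \is symmetric -> Delta_sym_multiple P -> Delta_sym_multiple (c * P).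
Proof. by move=> hc [r hr ->]; exists (c * r); rewrite ?rpredM // mulrCA. Qed.

(* X_i^(k+3) = e1 X_i^(k+2) - e2 X_i^(k+1) + e3 X_i^k, and cyc_alt (X^2) = Delta *)
Lemma cyc_alt_pow_Delta k : Delta_sym_multiple (cyc_alt (fun i => 'X_i ^+ k)).
Proof.
pose P k := Delta_sym_multiple (cyc_alt (fun i => 'X_i ^+ k)).
suff : [/\ P k, P k.+1 & P k.+2] by case.
elim: k => [|k [h0 h1 h2]].
  split; [exists 0 | exists 0 | exists 1]; rewrite ?rpred0 ?rpred1 //;
  by rewrite /cyc_alt /Delta; pol_ring.
split => //; rewrite /P.
have -> : cyc_alt (fun i => 'X_i ^+ k.+3) = e1 * cyc_alt (fun i => 'X_i ^+ k.+2)
  - e2 * cyc_alt (fun i => 'X_i ^+ k.+1) + e3 * cyc_alt (fun i => 'X_i ^+ k).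
  by rewrite /cyc_alt e1E e2E e3E !exprS; pol_ring.
rewrite -mulNr; apply: Delta_sym_multipleD; first apply: Delta_sym_multipleD.
all: by apply: Delta_sym_multipleMl; sym_closed.
Qed.

Lemma cyc_alt_horner_Delta (Q : {poly Pol}) : Q \is a polyOver (@symmetric_pred 3 rat) ->
  Delta_sym_multiple (cyc_alt (fun i => Q.[ 'X_i ])).
Proof.
move=> /polyOverP Qsym; rewrite /cyc_alt !horner_coef !big_distrl -!big_split /=.
apply: (big_ind Delta_sym_multiple); first by exists 0; rewrite ?rpred0 ?mulr0.
  exact: Delta_sym_multipleD.
move=> j _; rewrite -!mulrA -!mulrDr.
exact: Delta_sym_multipleMl (Qsym j) (cyc_alt_pow_Delta j).
Qed.

Section Psi.
Variables (m : nat) (g : {poly int}).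

Definition Fpoly : {poly Pol} :=
  ('X^2 - e1%:P * 'X + e2%:P) ^+ m * \sum_(k < size g) ((g`_k)%:~R : rat)%:MP%:P * 'X^k.

Lemma Fch_horner i : Fch m g i = Fpoly.[ 'X_i ].
Proof.
rewrite /Fch /Fpoly hornerM horner_exp !hornerE horner_sum tinv_quad; congr (_ * _).
by apply: eq_bigr => k _; rewrite !hornerE mul_mpolyC.
Qed.

Lemma Fpoly_sym : Fpoly \is a polyOver (@symmetric_pred 3 rat).
Proof.
apply: rpredM.
  apply/rpredX/rpredD; last by rewrite polyOverC e2_sym.
  by apply/rpredB/rpredM; rewrite ?polyOverXn ?polyOverX ?polyOverC ?e1_sym.
apply: rpred_sum => k _; apply: rpredM; last exact: polyOverXn.
by rewrite polyOverC -[X in X \in _]mulr1 mul_mpolyC rpredZ ?rpred1.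
Qed.

Lemma Psi_det b : Delta_sym_multiple (- detMat m g b).
Proof.
case: b; rewrite -[- _]/(rnum (inRF _)) -?qplusE -?qminusE.
  have -> : rnum (qplus m g) = cyc_alt (fun i => Fpoly.[ 'X_i ]).
    by rewrite /qplus /cyc_alt -!Fch_horner /= /theta /tv; pol_ring.
  exact/cyc_alt_horner_Delta/Fpoly_sym.
have -> : rnum (qminus m g) = cyc_alt (fun i => (- (Fpoly * 'X)).[ 'X_i ]).
  case: tinvE => h0 h1 h2.
  by rewrite /qminus /cyc_alt !(hornerN, hornerMX) -!Fch_horner /= /theta h0 h1 h2; pol_ring.
by apply/cyc_alt_horner_Delta; rewrite rpredN rpredM ?polyOverX ?Fpoly_sym.
Qed.

End Psi.

Arguments qplus : simpl never.
Arguments qminus : simpl never.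

Section Generation.
Variables (m : nat) (g : {poly int}).
Local Notation D := (Dloc m g).
Local Notation theta := (theta m g).
Local Notation qp := (rnum (qplus m g)).
Local Notation qm := (rnum (qminus m g)).

Lemma msym_theta (s : 'S_3) j k : msym s (theta j k) = theta (s j) (s k).
Proof. by rewrite msymB !msym_Fch. Qed.

Definition q_span (P : Pol) := exists A B : Pol,
  [/\ A \is symmetric, B \is symmetric & P = A * qp + B * qm].

Lemma q_spanD P Q : q_span P -> q_span Q -> q_span (P + Q).
Proof.
move=> [A [B [hA hB ->]]] [A' [B' [hA' hB' ->]]].
by exists (A + A'), (B + B'); split; rewrite ?rpredD //; pol_ring.
Qed.

Lemma asym_artin_theta10 c : (forall k, c k \is symmetric) ->
  asym (artin_comb c * theta 1 0) =
  (c 1%N + e1 * c 2%N + c 3%N) * qp + (c 2%N - 2%:R * c 4%N - e1 * c 5%N) * qm.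
Proof.
move=> /(_ _) /issymP c_sym; rewrite asym3E !msymM !msym_theta /artin_comb.
rewrite !(msymD, msymM, msymXn, c_sym, msymXU) !S3_valsE.
by case: tinvE => h0 h1 h2; rewrite /qplus /qminus /= /theta /tv h0 h1 h2 e1E; pol_ring.
Qed.

Lemma asym_theta10_span y : q_span (asym (y * theta 1 0)).
Proof.
have [c [c_sym ->]] := artin_decomposition y; rewrite asym_artin_theta10 //.
by do 2 eexists; split; last reflexivity; sym_closed.
Qed.

Lemma asym_theta21_span y : q_span (asym (y * theta 2 1)).
Proof.
have -> : theta 2 1 = msym r1 (theta 1 0) by rewrite msym_theta !S3_valsE.
have -> : y = msym r1 (msym r1^-1 y) by rewrite -msymMm mulVg msym1m.
by rewrite -msymM asym_msym S3_oddE expr0 mul1r; apply: asym_theta10_span.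
Qed.

Lemma antiRF_asym x e : antiRF m g (mkRF x e) -> eqloc m g (asym x) (x *+ 6).
Proof.
move=> anti_x; have -> : x *+ 6 = \sum_(s : 'S_3) x by rewrite sumr_const card_Sn.
apply: eqloc_sum => s; apply: (@eqloc_mulDl _ _ e).
by have /eqRFE := anti_x s.
Qed.

Lemma inIF_asym_span x e : inIF m g (mkRF x e) ->
  exists N A B, [/\ A \is symmetric, B \is symmetric &
    eqloc m g (D ^+ N * asym x) (A * qp + B * qm)].
Proof.
move=> [[xa ea] [[xb eb] hx]]; move: hx; rewrite eqRFE /= !addn0 => hx.
have [A [B [hA hB eAB]]] :
  q_span (asym (D ^+ e * D ^+ eb * xa * theta 1 0 + D ^+ e * D ^+ ea * xb * theta 2 1)).
  by rewrite asymD; apply: q_spanD; [apply: asym_theta10_span | apply: asym_theta21_span].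
exists (ea + eb)%N, A, B; split => //; rewrite -eAB -asymMsym; last exact/rpredX/Dloc_sym.
by apply: eqloc_asym; apply: eqloc_trans hx _; apply: eq_eqloc; rewrite /theta; pol_ring.
Qed.

Lemma antiRF_inIF_span p : antiRF m g p -> inIF m g p ->
  exists A B E, [/\ A \is symmetric, B \is symmetric &
    eqRF m g p (addRF m g (mulRF (mkRF A E) (qplus m g)) (mulRF (mkRF B E) (qminus m g)))].
Proof.
case: p => x e anti_x /inIF_asym_span [N [A [B [hA hB hAB]]]].
have sixK : D ^+ N * x = (6%:R)^-1 *: (D ^+ N * (x *+ 6)).
  by rewrite mulrnAr -scaler_nat scalerA mulVf ?scale1r.
have hx : eqloc m g (D ^+ N * x) ((6%:R)^-1 *: (A * qp + B * qm)).
  rewrite sixK; apply: eqloc_scale.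
  exact: eqloc_trans (eqloc_mull _ (eqloc_sym (antiRF_asym anti_x))) hAB.
exists ((6%:R)^-1 *: A), ((6%:R)^-1 *: B), (N + e)%N; split; try sym_closed.
rewrite eqRFE /= !addn0.
have -> : D ^+ (N + e + (N + e)) * x = D ^+ (N + e + e) * (D ^+ N * x).
  by rewrite !exprD; pol_ring.
rewrite -!mul_mpolyC in hx *.
have -> (P Q : Pol) :
    D ^+ e * (D ^+ (N + e) * P + D ^+ (N + e) * Q) = D ^+ (N + e + e) * (P + Q).
  by rewrite !exprD; pol_ring.
by rewrite -!mulrA -mulrDr; apply: eqloc_mull.
Qed.

End Generation.

Theorem lemma5p11 (m : nat) (g : {poly int}) (hg : forall k, 0 <= g`_k) :
  (* q_+ and q_- lie in (I_F^sgn)^W *)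
  (antiRF m g (qplus m g) /\ inIF m g (qplus m g)) /\
  (antiRF m g (qminus m g) /\ inIF m g (qminus m g)) /\
  (* they generate (I_F^sgn)^W as an R_F^W-module *)
  (forall p : RF, antiRF m g p -> inIF m g p ->
     exists a b : RF, symRF m g a /\ symRF m g b /\
       eqRF m g p (addRF m g (mulRF a (qplus m g)) (mulRF b (qminus m g)))) /\
  (* Psi(q_+-) exists and equals -(1/Delta) det(...) *)
  (exists r : RF, symRF m g r /\ eqRF m g (mulRF (inRF Delta) r) (qplus m g) /\
       eqRF m g (mulRF (inRF Delta) r) (inRF (- detMat m g true))) /\
  (exists r : RF, symRF m g r /\ eqRF m g (mulRF (inRF Delta) r) (qminus m g) /\
       eqRF m g (mulRF (inRF Delta) r) (inRF (- detMat m g false))) /\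
  (* consequently Psi((I_F^sgn)^W) is generated by Psi(q_+), Psi(q_-) *)
  (forall rp rm : RF,
     symRF m g rp -> eqRF m g (mulRF (inRF Delta) rp) (qplus m g) ->
     symRF m g rm -> eqRF m g (mulRF (inRF Delta) rm) (qminus m g) ->
     forall p r : RF, antiRF m g p -> inIF m g p ->
       symRF m g r -> eqRF m g (mulRF (inRF Delta) r) p ->
       exists a b : RF, symRF m g a /\ symRF m g b /\
         eqRF m g r (addRF m g (mulRF a rp) (mulRF b rm))).
Proof.
have Psi b : exists r, symRF m g r /\ eqRF m g (mulRF (inRF Delta) r) (inRF (- detMat m g b)).
  have [rho rho_sym erho] := Psi_det m g b.
  by exists (inRF rho); split; [apply: symRF_sym | apply/eqRFE/eq_eqloc; rewrite /= erho].
have span := @antiRF_inIF_span m g.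
split; first by split; [rewrite qplusE; apply: antiRF_det | apply: inIF_qplus].
split; first by split; [rewrite qminusE; apply: antiRF_det | apply: inIF_qminus].
split.
  move=> p anti_p inI_p; have [A [B [E [symA symB ep]]]] := span p anti_p inI_p.
  by exists (mkRF A E), (mkRF B E); do 2 (split; first exact: symRF_sym).
split; first by have [r [sym_r er]] := Psi true; exists r; rewrite qplusE.
split; first by have [r [sym_r er]] := Psi false; exists r; rewrite qminusE.
move=> rp rm _ Drp _ Drm p r anti_p inI_p _ Dr.
have [A [B [E [symA symB ep]]]] := span p anti_p inI_p.
exists (mkRF A E), (mkRF B E); do 2 (split; first exact: symRF_sym).
apply: eqRF_cancel_Delta; apply: eqRF_trans Dr _; apply: eqRF_trans ep _.
apply: eqRF_trans _ (eqRF_factorl m g _ _ _ _ _).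
by apply: eqRF_add; apply: eqRF_mul (eqRF_refl _ _ _) (eqRF_sym _).
Qed.
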